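(* Let $f:[0,1]\to\mathbb{R}$ with $f(0),f(1)\in\mathbb{Z}$ and let $n\in\mathbb{N}_+$. If $n\ge 3$, let also $\psi_n:[0,1]\to\mathbb{R}$ satisfy \[ \psi_n\left(\frac{k+1}{n}\right)-\psi_n\left(\frac{k}{n}\right)\ge \binom{n}{k}^{-1},\quad k=1,\dots,n-2. \] If $f$ is monotone decreasing on $[0,1/n]$ and on $[1-1/n,1]$, and (when $n\ge3$) $f(x)+\psi_n(x)$ is monotone decreasing on $[1/n,1-1/n]$, then $\widetilde{B}_n(f)$ is monotone decreasing on $[0,1]$.
   Context: For $n\in\mathbb{N}_+$ and $f:[0,1]\to\mathbb{R}$, $\widetilde{B}_n(f)(x):=\sum_{k=0}^n \left[f\left(\frac{k}{n}\right)\binom{n}{k}\right]x^k(1-x)^{n-k}$, where $[\alpha]$ is the largest integer $\le\alpha$. Monotone decreasing is meant in the non-strict sense. *)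

From HB Require Import structures.
From mathcomp Require Import all_boot all_order all_algebra.
From mathcomp Require Import reals.
Set Implicit Arguments. Unset Strict Implicit. Unset Printing Implicit Defensive.
Import Order.TTheory GRing.Theory Num.Theory.
Local Open Scope ring_scope.

Definition Btilde (R : realType) (n : nat) (f : R -> R) (x : R) : R :=
  \sum_(k < n.+1)
     (Num.floor (f (k%:R / n%:R) * ('C(n, k))%:R))%:~R
       * x ^+ k * (1 - x) ^+ (n - k).

Definition decreasing_on (R : realType) (f : R -> R) (a b : R) : Prop :=
  forall x y, a <= x -> x <= y -> y <= b -> f y <= f x.

From HB Require Import structures.
From mathcomp Require Import all_boot all_order all_algebra.
From mathcomp Require Import reals.
From mathcomp Require Import ring lra zify.
Set Implicit Arguments. Unset Strict Implicit. Unset Printing Implicit Defensive.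
Import Order.TTheory GRing.Theory Num.Theory.
Local Open Scope ring_scope.

(* Writing [C] for ['C(n, k)], the k-th coefficient of [Btilde n f] is
   [C * c_k] with [c_k] the largest multiple of [1/C] below [f (k/n)], so
   [Btilde n f] is the Bernstein polynomial with coefficients [c_k], and a
   Bernstein polynomial with nonincreasing coefficients is nonincreasing on
   [0, 1].  Rounding down loses less than [1/C]: the coefficients keep
   decreasing where [f] drops by at least [1/C] (the middle range, thanks to
   [psi]) or where an integer lies between two consecutive values of [f]
   (the two end steps, as [f 0] and [f 1] are integers). *)

Definition bernstein (R : comRingType) (n : nat) (c : nat -> R) (x : R) : R :=
  \sum_(k < n.+1) c k * 'C(n, k)%:R * x ^+ k * (1 - x) ^+ (n - k).

Lemma bernsteinS (R : comRingType) n (c : nat -> R) x :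
  bernstein n.+1 c x =
  (1 - x) * bernstein n c x + x * bernstein n (fun k => c k.+1) x.
Proof.
pose T k := c k * 'C(n, k)%:R * x ^+ k * (1 - x) ^+ (n.+1 - k).
pose U k := c k.+1 * 'C(n, k)%:R * x ^+ k.+1 * (1 - x) ^+ (n - k).
have -> : (1 - x) * bernstein n c x = \sum_(k < n.+2) T k.
  rewrite big_ord_recr /= /T bin_small // mulr0 !mul0r addr0.
  rewrite /bernstein mulr_sumr; apply: eq_bigr => i _.
  by rewrite subSn 1?exprS; [ring | rewrite -ltnS].
have -> : x * bernstein n (fun k => c k.+1) x = \sum_(k < n.+1) U k.
  rewrite /bernstein mulr_sumr; apply: eq_bigr => i _.
  by rewrite /U exprS; ring.
rewrite /bernstein big_ord_recl [in RHS]big_ord_recl /T /U /= -addrA.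
under eq_bigr => i _ do rewrite /bump /= binS natrD subSS !(mulrDr, mulrDl).
by rewrite big_split /= !bin0 !subn0.
Qed.

Lemma ler_bernstein (R : numDomainType) n (c d : nat -> R) x :
  0 <= x <= 1 -> (forall k, (k <= n)%N -> d k <= c k) ->
  bernstein n d x <= bernstein n c x.
Proof.
move=> /andP[x0 x1] le_dc; apply: ler_sum => k _.
have x1_ge0 : 0 <= 1 - x by rewrite subr_ge0.
rewrite -!mulrA ler_wpM2r ?mulr_ge0 ?exprn_ge0 //.
by apply: le_dc; rewrite -ltnS.
Qed.

Lemma bernstein_nonincreasing (R : realDomainType) n (c : nat -> R) :
  (forall k, (k < n)%N -> c k.+1 <= c k) ->
  forall x y, 0 <= x -> x <= y -> y <= 1 -> bernstein n c y <= bernstein n c x.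
Proof.
elim: n c => [|n IHn] c c_decr x y x0 xy y1.
  by rewrite /bernstein !big_ord1.
have x1 : x <= 1 by apply: le_trans y1.
have y0 : 0 <= y by apply: le_trans xy.
rewrite !bernsteinS.
set P := bernstein n c; set Q := bernstein n (fun k => c k.+1).
have PyPx : P y <= P x.
  by apply: IHn => // k kn; apply: c_decr; rewrite ltnS ltnW.
have QyQx : Q y <= Q x by apply: IHn => // k kn; apply: c_decr.
have QxPx : Q x <= P x by apply: ler_bernstein; rewrite ?x0.
(* The difference of the two sides is
   (1 - y) (P y - P x) + y (Q y - Q x) - (y - x) (P x - Q x). *)
have : 0 <= (y - x) * (P x - Q x) by apply: mulr_ge0; rewrite ?subr_ge0.
have : 0 <= (1 - y) * (P x - P y) by apply: mulr_ge0; rewrite ?subr_ge0.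
have : 0 <= y * (Q x - Q y) by apply: mulr_ge0; rewrite ?subr_ge0.
lra.
Qed.

Definition round_down (R : archiRealFieldType) (C : nat) (v : R) : R :=
  (Num.floor (v * C%:R))%:~R / C%:R.

Section RoundDown.
Variables (R : archiRealFieldType) (C : nat).
Hypothesis C_gt0 : (0 < C)%N.

Let C_gt0R : 0 < C%:R :> R. Proof. by rewrite ltr0n. Qed.

Lemma round_down_le (v : R) : round_down C v <= v.
Proof. by rewrite ler_pdivrMr // floor_le. Qed.

Lemma round_down_gt (v : R) : v - C%:R^-1 < round_down C v.
Proof.
rewrite ltr_pdivlMr // mulrBl mulVf ?gt_eqF //.
have := floorD1_gt (v * C%:R); rewrite intrD; lra.
Qed.

Lemma round_down_ge_int (z : int) (v : R) :
  z%:~R <= v -> z%:~R <= round_down C v.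
Proof.
move=> zv; rewrite ler_pdivlMr // -[C%:R]/(C%:Z%:~R) -intrM ler_int.
by rewrite floor_ge_int intrM ler_wpM2r // ltW.
Qed.

End RoundDown.

Lemma round_down_le_int_between (R : archiRealFieldType) (C C' : nat)
    (u v : R) (z : int) :
  (0 < C)%N -> (0 < C')%N -> u <= z%:~R <= v ->
  round_down C' u <= round_down C v.
Proof.
move=> C_gt0 C'_gt0 /andP[uz zv]; apply: le_trans (round_down_le C'_gt0 u) _.
exact: le_trans uz (round_down_ge_int C_gt0 zv).
Qed.

Lemma round_down_le_gap (R : archiRealFieldType) (C C' : nat) (u v : R) :
  (0 < C)%N -> (0 < C')%N -> u + C%:R^-1 <= v ->
  round_down C' u <= round_down C v.
Proof.
move=> C_gt0 C'_gt0 uv; apply: le_trans (round_down_le C'_gt0 u) _.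
by apply/ltW/(le_lt_trans _ (round_down_gt C_gt0 v)); rewrite lerBrDr.
Qed.

Lemma Btilde_bernstein (R : realType) n (f : R -> R) x :
  Btilde n f x = bernstein n (fun k => round_down 'C(n, k) (f (k%:R / n%:R))) x.
Proof.
apply: eq_bigr => k _; rewrite /round_down divfK // pnatr_eq0 -lt0n bin_gt0.
by rewrite -ltnS.
Qed.

Lemma divr_predn (R : numFieldType) (n : nat) :
  (0 < n)%N -> n.-1%:R / n%:R = 1 - n%:R^-1 :> R.
Proof.
by move=> n_gt0; rewrite -subn1 natrB // mulrBl div1r divff // pnatr_eq0 -lt0n.
Qed.

Lemma decreasing_on_grid_step (R : realType) (g : R -> R) a b (n k : nat) :
  decreasing_on g a b -> a <= k%:R / n%:R -> k.+1%:R / n%:R <= b ->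
  g (k.+1%:R / n%:R) <= g (k%:R / n%:R).
Proof.
move=> g_decr ak k1b; apply: g_decr => //.
by rewrite ler_wpM2r ?invr_ge0 ?ler_nat.
Qed.

Theorem proposition2p6 (R : realType) (f psi : R -> R) (n : nat) :
  (0 < n)%N ->
  (exists z : int, f 0 = z%:~R) ->
  (exists z : int, f 1 = z%:~R) ->
  decreasing_on f 0 (n%:R^-1) ->
  decreasing_on f (1 - n%:R^-1) 1 ->
  ((3 <= n)%N ->
     (forall k : nat, (1 <= k)%N -> (k <= n - 2)%N ->
        psi (k.+1%:R / n%:R) - psi (k%:R / n%:R) >= (('C(n, k))%:R)^-1) /\
     decreasing_on (fun x => f x + psi x) (n%:R^-1) (1 - n%:R^-1)) ->
  decreasing_on (Btilde n f) 0 1.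
Proof.
move=> n_gt0 [z0 f0] [z1 f1] f_decr_left f_decr_right f_psi_middle x y x0 xy y1.
rewrite !Btilde_bernstein; apply: bernstein_nonincreasing => // k kn.
have n_gt0R : 0 < n%:R :> R by rewrite ltr0n.
have [-> | k_gt0] := posnP k.
  apply: (round_down_le_int_between (z := z0)); rewrite ?bin_gt0 //.
  rewrite -f0 mulr0n mul0r lexx andbT.
  have := decreasing_on_grid_step (n := n) (k := 0) f_decr_left.
  by rewrite mul0r; apply=> //; rewrite mul1r.
have [kn1 | kn1] := eqVneq k.+1 n.
  have := decreasing_on_grid_step (n := n) (k := k) f_decr_right.
  have -> : k = n.-1 by rewrite -kn1.
  rewrite prednK // divff ?gt_eqF // divr_predn // !lexx => /(_ isT isT) f_step.
  apply: (round_down_le_int_between (z := z1)); rewrite ?bin_gt0 ?leq_pred //.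
  by rewrite -f1 lexx.
have n_ge3 : (3 <= n)%N by lia.
have [psi_jump f_psi_decr] := f_psi_middle n_ge3.
have k1_le : (k.+1 <= n.-1)%N by lia.
have := decreasing_on_grid_step (n := n) (k := k) f_psi_decr.
rewrite ler_pdivlMr // mulVf ?gt_eqF // ler1n k_gt0 -divr_predn //.
rewrite ler_pM2r ?invr_gt0 // ler_nat k1_le => /(_ isT isT) f_psi_step.
have psi_ge := psi_jump k k_gt0 ltac:(lia).
by apply: round_down_le_gap; rewrite ?bin_gt0 ?(ltnW kn) //; lra.
Qed.
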